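(* Let $\mathcal{C}$ be a Fraïssé class of finite structures over a finite relational language, all of whose members are rigid, with Fraïssé limit $M$, and suppose that $\mathcal{C}$ contains exactly one $2$-element structure up to isomorphism. Then either $M$ has a reduct which is a total order, or there exist $A,B\in\mathcal{C}$ with $|A|=2$ and $|B|=3$ such that for every $C\in\mathcal{C}$ there is a $2$-colouring of the embeddings $A\to C$ for which no embedding $B\to C$ is monochromatic (so $\mathcal{C}$ is not a Ramsey class).
   Context: All structures are non-empty, and classes are closed under isomorphism and hereditary. A Fraïssé class is a hereditary class with the joint embedding and amalgamation properties; its Fraïssé limit is the unique countable homogeneous structure with age $\mathcal{C}$. A reduct of $M$ which is a total order means a strict total order on the domain of $M$ definable in $M$ by a first-order formula without parameters. An embedding $g:B\to C$ is monochromatic for a colouring of the embeddings $A\to C$ if all embeddings $A\to C$ with image contained in the image of $g$ get the same colour. $\mathcal{C}$ is a Ramsey class if for all $A,B\in\mathcal{C}$ there is $C\in\mathcal{C}$ such that every $2$-colouring of the embeddings $A\to C$ admits a monochromatic embedding $B\to C$. *)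

From mathcomp Require Import all_boot.
Set Implicit Arguments. Unset Strict Implicit. Unset Printing Implicit Defensive.

Record lang := Lang { sym : finType; arity : sym -> nat }.

Record struct (L : lang) := Struct {
  car :> Type;
  rel : forall s : sym L, ('I_(arity s) -> car) -> Prop }.

Record fstruct (L : lang) := FStruct {
  fcar :> finType;
  frel : forall s : sym L, ('I_(arity s) -> fcar) -> Prop }.

Definition to_struct L (A : fstruct L) : struct L := @Struct L (fcar A) (@frel L A).
Coercion to_struct : fstruct >-> struct.

Section Basics.
Variable L : lang.

Definition embedding (A B : struct L) (f : A -> B) : Prop :=
  injective f /\
  forall (s : sym L) (a : 'I_(arity s) -> A), rel a <-> rel (f \o a).

Definition embeds (A B : struct L) : Prop := exists f : A -> B, embedding f.

Definition isomorphism (A B : struct L) (f : A -> B) : Prop :=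
  embedding f /\ forall y : B, exists x : A, f x = y.

Definition isomorphic (A B : struct L) : Prop := exists f : A -> B, isomorphism f.

Definition automorphism (A : struct L) (f : A -> A) : Prop := isomorphism f.

Definition rigid (A : struct L) : Prop :=
  forall f : A -> A, automorphism f -> forall x, f x = x.

Definition iso_closed (C : fstruct L -> Prop) : Prop :=
  forall A B : fstruct L, isomorphic A B -> C A -> C B.

Definition hereditary (C : fstruct L -> Prop) : Prop :=
  iso_closed C /\ (forall A : fstruct L, C A -> 0 < #|fcar A|) /\
  forall A B : fstruct L, 0 < #|fcar A| -> embeds A B -> C B -> C A.

Definition JEP (C : fstruct L -> Prop) : Prop :=
  forall A B : fstruct L, C A -> C B ->
    exists D : fstruct L, C D /\ embeds A D /\ embeds B D.

Definition AP (C : fstruct L -> Prop) : Prop :=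
  forall (A B1 B2 : fstruct L) (f1 : A -> B1) (f2 : A -> B2),
    C A -> C B1 -> C B2 -> @embedding A B1 f1 -> @embedding A B2 f2 ->
    exists (D : fstruct L) (g1 : B1 -> D) (g2 : B2 -> D),
      C D /\ @embedding B1 D g1 /\ @embedding B2 D g2 /\ g1 \o f1 =1 g2 \o f2.

Definition fraisse_class (C : fstruct L -> Prop) : Prop :=
  hereditary C /\ JEP C /\ AP C.

Definition countable_struct (M : struct L) : Prop :=
  exists f : M -> nat, injective f.

Definition homogeneous (M : struct L) : Prop :=
  forall (A : fstruct L) (f g : A -> M), @embedding A M f -> @embedding A M g ->
    exists h : M -> M, automorphism h /\ h \o f =1 g.

Definition age_is (M : struct L) (C : fstruct L -> Prop) : Prop :=
  forall A : fstruct L, C A <-> (0 < #|fcar A| /\ embeds A M).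

Definition fraisse_limit (C : fstruct L -> Prop) (M : struct L) : Prop :=
  inhabited M /\ countable_struct M /\ homogeneous M /\ age_is M C.

Inductive formula : Type :=
  | FEq : nat -> nat -> formula
  | FRel : forall s : sym L, ('I_(arity s) -> nat) -> formula
  | FNeg : formula -> formula
  | FAnd : formula -> formula -> formula
  | FEx : nat -> formula -> formula.

Definition upd (M : Type) (e : nat -> M) (i : nat) (x : M) : nat -> M :=
  fun j => if j == i then x else e j.

Fixpoint sat (M : struct L) (e : nat -> M) (phi : formula) : Prop :=
  match phi with
  | FEq i j => e i = e j
  | FRel s v => rel (e \o v)
  | FNeg p => ~ sat e p
  | FAnd p q => sat e p /\ sat e q
  | FEx i p => exists x : M, sat (upd e i x) p
  end.

Definition definable2 (M : struct L) (R : M -> M -> Prop) : Prop :=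
  exists phi : formula, forall e : nat -> M, sat e phi <-> R (e 0) (e 1).

Definition strict_total_order (T : Type) (R : T -> T -> Prop) : Prop :=
  (forall x, ~ R x x) /\ (forall x y z, R x y -> R y z -> R x z) /\
  (forall x y, x <> y -> R x y \/ R y x).

Definition has_total_order_reduct (M : struct L) : Prop :=
  exists R : M -> M -> Prop, definable2 R /\ strict_total_order R.

Definition image_in (A B C : struct L) (e : A -> C) (g : B -> C) : Prop :=
  forall a : A, exists b : B, e a = g b.

Definition monochromatic (A B C : struct L) (chi : (A -> C) -> bool) (g : B -> C) : Prop :=
  forall e1 e2 : A -> C, embedding e1 -> embedding e2 ->
    image_in e1 g -> image_in e2 g -> chi e1 = chi e2.

End Basics.

From Pilot Require Import Defs.
From mathcomp Require Import all_boot zify.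
From Stdlib Require Import Classical FunctionalExtensionality.
Set Implicit Arguments. Unset Strict Implicit. Unset Printing Implicit Defensive.

(* Let A0 = {a, b} be the two-element structure of C and call (x, y) an edge
   when a |-> x, b |-> y embeds A0.  Rigidity of A0 makes edges asymmetric and
   uniqueness of the two-element structure makes them total, so the edges form
   a definable tournament on M.  If it is transitive it is the required order.
   Otherwise it contains a directed 3-cycle, which spans a three-element B in
   C.  Colour an embedding of A0 into D by whether it increases a fixed
   enumeration of D: the three edges of a copy of B cannot all get the same
   colour, because a linear order cannot follow a directed cycle. *)

Lemma tournament_order_or_cycle (T : Type) (R : T -> T -> Prop) :
  (forall x y, R x y -> ~ R y x) -> (forall x y, x <> y -> R x y \/ R y x) ->
  strict_total_order R \/ exists x y z, [/\ R x y, R y z & R z x].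
Proof.
move=> Rasym Rtotal.
case: (classic (exists x y z, [/\ R x y, R y z & ~ R x z])) => [|no_gap].
  move=> [x [y [z [Rxy Ryz nRxz]]]]; right; exists x, y, z; split=> //.
  have zx : z <> x by move=> E; move: Ryz; rewrite E; exact: Rasym.
  by case: (Rtotal z x zx) => // /nRxz.
left; split; first by move=> x Rxx; exact: (Rasym x x Rxx Rxx).
split=> [x y z Rxy Ryz|]; last exact: Rtotal.
by apply: NNPP => nRxz; apply: no_gap; exists x, y, z.
Qed.

Lemma ltn_cycle_nonconst (m n p : nat) :
  m != n -> (m < n) = (n < p) -> (n < p) = (p < m) -> False.
Proof. by case: (ltnP m n); case: (ltnP n p); case: (ltnP p m) => //=; lia. Qed.

Lemma card2P (T : finType) :
  #|T| = 2 -> exists a b : T, a != b /\ forall t, t = a \/ t = b.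
Proof.
rewrite cardE; have := enum_uniq T; have := mem_enum T.
case: (enum T) => [|a [|b [|? ?]]] //= mem_ab uniq_ab _.
exists a, b; split; first by move: uniq_ab; rewrite inE andbT.
move=> t; have : t \in [:: a; b] by rewrite mem_ab.
by rewrite !inE => /orP [] /eqP; [left | right].
Qed.

Section Embeddings.
Variable L : lang.

Lemma embedding_comp (A B D : struct L) (f : A -> B) (g : B -> D) :
  embedding f -> embedding g -> embedding (g \o f).
Proof.
move=> [f_inj f_rel] [g_inj g_rel]; split; first exact: inj_comp.
by move=> s al; rewrite (f_rel s al) (g_rel s (f \o al)).
Qed.

Definition induced (M : struct L) (T : finType) (h : T -> M) : fstruct L :=
  @FStruct L T (fun s al => Defs.rel (h \o al)).

Variables (M : struct L) (T : finType) (h : T -> M).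
Hypothesis h_inj : injective h.

Lemma induced_embedding : @embedding L (induced h) M h.
Proof. by []. Qed.

Lemma embedding_induced (A : struct L) (f : A -> T) :
  injective f -> embedding (h \o f) -> @embedding L A (induced h) f.
Proof. by move=> f_inj [_ hf_rel]. Qed.

Lemma age_induced (C : fstruct L -> Prop) :
  age_is M C -> 0 < #|T| -> C (induced h).
Proof. by move=> age_MC T_gt0; apply/age_MC; split=> //; exists h. Qed.

End Embeddings.

Lemma formula_forall_fin (L : lang) (M : struct L) (X : finType)
    (P : X -> (nat -> M) -> Prop) :
  (forall x, exists phi, forall e, sat e phi <-> P x e) ->
  exists phi, forall e, sat e phi <-> forall x, P x e.
Proof.
move=> P_def.
suff [phi phiP] : exists phi, forall e,
    sat e phi <-> forall x, x \in enum X -> P x e.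
  by exists phi => e; rewrite phiP; split=> Pe x; [apply: Pe; rewrite mem_enum | move=> _].
elim: (enum X) => [|x l [phi phiP]]; first by exists (FEq L 0 0).
have [psi psiP] := P_def x.
exists (FAnd psi phi) => e /=; rewrite psiP phiP; split.
  by move=> [Pxe Ple] y; rewrite inE => /predU1P [->|]; last exact: Ple.
by move=> Pe; split=> [|y yl]; apply: Pe; rewrite inE ?eqxx ?yl ?orbT.
Qed.

Section TwoPointStructure.
Variables (L : lang) (A0 : fstruct L) (a b : A0).
Hypothesis a_neq_b : a != b.
Hypothesis A0_ab : forall t : A0, t = a \/ t = b.

Definition pairf (Y : Type) (u v : Y) : A0 -> Y := fun t => if t == a then u else v.

Lemma pairf_a (Y : Type) (u v : Y) : pairf u v a = u.
Proof. by rewrite /pairf eqxx. Qed.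

Lemma pairf_b (Y : Type) (u v : Y) : pairf u v b = v.
Proof. by rewrite /pairf eq_sym (negbTE a_neq_b). Qed.

Lemma pairf_inj (Y : Type) (u v : Y) : u <> v -> injective (pairf u v).
Proof.
move=> uv t1 t2.
by case: (A0_ab t1) => ->; case: (A0_ab t2) => ->; rewrite ?pairf_a ?pairf_b // => E;
  case: uv; rewrite E.
Qed.

Lemma comp_pairf (Y Z : Type) (h : Y -> Z) (u v : Y) :
  h \o pairf u v = pairf (h u) (h v).
Proof. by apply: functional_extensionality => t /=; rewrite /pairf; case: (t == a). Qed.

Definition edge (M : struct L) (x y : M) : Prop := @embedding L A0 M (pairf x y).

Lemma edge_neq (M : struct L) (x y : M) : edge x y -> x <> y.
Proof.
move=> [f_inj _] xy; have := f_inj a b; rewrite pairf_a pairf_b => /(_ xy) ab.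
by move: a_neq_b; rewrite ab eqxx.
Qed.

Lemma pairf_eta (Y : Type) (f : A0 -> Y) : f = pairf (f a) (f b).
Proof.
apply: functional_extensionality => t.
by case: (A0_ab t) => ->; rewrite ?pairf_a ?pairf_b.
Qed.

Lemma edge_asym (M : struct L) (x y : M) : rigid A0 -> edge x y -> ~ edge y x.
Proof.
move=> A0_rigid [_ xy_rel] [_ yx_rel].
have swap_aut : automorphism (pairf b a : A0 -> A0).
  split; last first.
    by move=> t; case: (A0_ab t) => ->; [exists b; rewrite pairf_b | exists a; rewrite pairf_a].
  split; first by apply: pairf_inj => ba; move: a_neq_b; rewrite ba eqxx.
  move=> s al; rewrite xy_rel yx_rel.
  suff -> : pairf y x \o (pairf b a \o al) = pairf x y \o al by [].
  rewrite -[LHS]/((pairf y x \o pairf b a) \o al).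
  by rewrite [pairf y x \o pairf b a]pairf_eta /= !(pairf_a, pairf_b).
have := A0_rigid _ swap_aut a; rewrite pairf_a => ba.
by move: a_neq_b; rewrite ba eqxx.
Qed.

Lemma sat_rel_pairf (M : struct L) (e : nat -> M) (s : sym L)
    (al : 'I_(arity s) -> A0) :
  sat e (FRel (pairf 0 1 \o al)) = Defs.rel (pairf (e 0) (e 1) \o al).
Proof. by rewrite /= -(comp_pairf e). Qed.

Lemma edge_definable (M : struct L) : definable2 (@edge M).
Proof.
have [phi phiP] : exists phi, forall e : nat -> M, sat e phi <->
    forall s (al : {ffun 'I_(arity s) -> A0}),
      Defs.rel (al : 'I_(arity s) -> A0) <-> Defs.rel (pairf (e 0) (e 1) \o al).
  apply: formula_forall_fin => s; apply: formula_forall_fin => al.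
  case: (classic (Defs.rel (al : 'I_(arity s) -> A0))) => al_rel.
    by exists (FRel (pairf 0 1 \o al)) => e; rewrite sat_rel_pairf; tauto.
  by exists (FNeg (FRel (pairf 0 1 \o al))) => e; rewrite /= -sat_rel_pairf; tauto.
exists (FAnd (FNeg (FEq L 0 1)) phi) => e /=; rewrite phiP; split.
  move=> [e01 rel_iff]; split=> [|s al]; first exact: pairf_inj.
  have al_ffun : fun_of_fin [ffun i => al i] = al.
    by apply: functional_extensionality => i; rewrite ffunE.
  by have := rel_iff s [ffun i => al i]; rewrite al_ffun.
move=> [pair_inj pair_rel]; split; last by move=> s al; exact: pair_rel.
by move=> e01; apply: edge_neq (conj pair_inj pair_rel) e01.
Qed.

Definition rank_colour (D : finType) (f : A0 -> D) : bool :=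
  enum_rank (f a) < enum_rank (f b).

Lemma edge_cycle_not_monochromatic (B : struct L) (D : fstruct L) (i j k : B)
    (g : B -> D) :
  edge i j -> edge j k -> edge k i -> embedding g ->
  ~ @monochromatic L A0 B D (@rank_colour D) g.
Proof.
move=> ij jk ki g_emb mono.
have colour_eq u v u' v' : edge u v -> edge u' v' ->
    rank_colour (pairf (g u) (g v)) = rank_colour (pairf (g u') (g v')).
  move=> uv uv'; rewrite -!comp_pairf.
  by apply: mono; try exact: embedding_comp; move=> t; eexists.
apply: (@ltn_cycle_nonconst (enum_rank (g i)) (enum_rank (g j)) (enum_rank (g k))).
- by apply/eqP => /val_inj /enum_rank_inj /(proj1 g_emb); exact: edge_neq ij.
- by have := colour_eq _ _ _ _ ij jk; rewrite /rank_colour !(pairf_a, pairf_b).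
- by have := colour_eq _ _ _ _ jk ki; rewrite /rank_colour !(pairf_a, pairf_b).
Qed.

Lemma edge_induced (M : struct L) (T : finType) (h : T -> M) (i j : T) :
  i <> j -> edge (h i) (h j) -> @edge (induced h) i j.
Proof.
by move=> ij hij; apply: embedding_induced; [exact: pairf_inj | rewrite comp_pairf].
Qed.

Lemma edge_total (C : fstruct L -> Prop) (M : struct L) :
  age_is M C -> C A0 -> #|A0| = 2 ->
  (forall A B : fstruct L, C A -> C B -> #|A| = 2 -> #|B| = 2 -> isomorphic A B) ->
  forall x y : M, x <> y -> edge x y \/ edge y x.
Proof.
move=> age_MC C_A0 A0_card uniq2 x y xy.
pose k (t : bool) : M := if t then x else y.
have k_inj : injective k by move=> [] [] //= E; case: xy; rewrite E.
have C_k := age_induced k_inj age_MC (ltac:(by rewrite card_bool) : 0 < #|{: bool}|).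
have [f [f_emb _]] := uniq2 _ _ C_A0 C_k A0_card card_bool.
have := embedding_comp f_emb (induced_embedding k_inj); rewrite [k \o f]pairf_eta /=.
have : f a != f b by apply: contra_neq a_neq_b; exact: (proj1 f_emb).
by case: (f a); case: (f b) => // _ kf; [left | right].
Qed.

End TwoPointStructure.

Lemma nth3_inj (T : Type) (x y z : T) :
  x <> y -> y <> z -> z <> x -> injective (fun i : 'I_3 => nth x [:: x; y; z] i).
Proof.
move=> xy yz zx [[|[|[|?]]] ?] [[|[|[|?]]] ?] //= E; try exact: val_inj;
  by [case: xy | case: yz | case: zx]; rewrite E.
Qed.

Theorem corollary1p6 (L : lang) (C : fstruct L -> Prop) (M : struct L) :
  fraisse_class C ->
  (forall A : fstruct L, C A -> rigid A) ->
  fraisse_limit C M ->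
  (exists A : fstruct L, C A /\ #|fcar A| = 2) ->
  (forall A B : fstruct L, C A -> C B -> #|fcar A| = 2 -> #|fcar B| = 2 ->
     isomorphic A B) ->
  has_total_order_reduct M \/
  exists A B : fstruct L, C A /\ C B /\ #|fcar A| = 2 /\ #|fcar B| = 3 /\
    forall D : fstruct L, C D ->
      exists chi : (fcar A -> fcar D) -> bool,
        forall g : fcar B -> fcar D, @embedding _ B D g ->
          ~ @monochromatic _ A B D chi g.
Proof.
move=> _ C_rigid [_ [_ [_ age_MC]]] [A0 [C_A0 A0_card]] uniq2.
have [a [b [a_neq_b A0_ab]]] := card2P A0_card.
have edge_tot := edge_total a_neq_b A0_ab age_MC C_A0 A0_card uniq2.
have edge_antisym (x y : M) : edge a x y -> ~ edge a y x.
  exact: (edge_asym a_neq_b A0_ab (C_rigid _ C_A0)).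
have [order | [x [y [z [xy yz zx]]]]] :=
  tournament_order_or_cycle edge_antisym edge_tot.
  by left; exists (@edge _ _ a M); split=> //; exact: edge_definable a_neq_b A0_ab M.
right; pose h (i : 'I_3) := nth x [:: x; y; z] i.
have h_inj : injective h.
  by apply: nth3_inj; [exact: (edge_neq a_neq_b xy) | exact: (edge_neq a_neq_b yz)
                      | exact: (edge_neq a_neq_b zx)].
exists A0, (induced h); split=> //; split.
  by apply: (age_induced h_inj age_MC); rewrite card_ord.
split=> //; split; first by rewrite card_ord.
move=> D _; exists (@rank_colour _ _ a b D) => g.
by apply: (@edge_cycle_not_monochromatic _ _ _ _ a_neq_b (induced h) D
            (@Ordinal 3 0 isT) (@Ordinal 3 1 isT) (@Ordinal 3 2 isT));
  apply: (edge_induced a_neq_b A0_ab) => // /(congr1 val).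
Qed.
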